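(* Let $(\mathcal{A},\mu,\alpha)$ be a Hom-flexible superalgebra and $\mathcal{A}^-=(\mathcal{A},[-,-],\alpha)$ with $[x,y]=xy-(-1)^{|x||y|}yx$. Then $\widetilde{J}_{\mathcal{A}^-}=2S_{\mathcal{A}}$, i.e. for all homogeneous $x,y,z$, $[[x,y],\alpha(z)]-[\alpha(x),[y,z]]-(-1)^{|y||z|}[[x,z],\alpha(y)]=2\big(\widetilde{as}(x,y,z)+(-1)^{|x|(|y|+|z|)}\widetilde{as}(y,z,x)+(-1)^{|z|(|x|+|y|)}\widetilde{as}(z,x,y)\big)$.
   Context: $\mathcal{A}=\mathcal{A}_0\oplus\mathcal{A}_1$ is a $\mathbb{Z}_2$-graded vector space over an algebraically closed field $\mathbb{K}$ of characteristic $0$; $|x|$ is the parity of homogeneous $x$; $\mu(x,y)=xy$ is even bilinear and $\alpha$ even linear. $\widetilde{as}(x,y,z)=(xy)\alpha(z)-\alpha(x)(yz)$. A Hom-flexible superalgebra is a triple $(\mathcal{A},\mu,\alpha)$ with $\widetilde{as}(x,y,z)+(-1)^{|x||y|+|x||z|+|y||z|}\widetilde{as}(z,y,x)=0$ for all homogeneous $x,y,z$. $S_{\mathcal{A}}$ denotes the cyclic Hom-associator $S_{\mathcal{A}}(x,y,z)=\widetilde{as}(x,y,z)+(-1)^{|x|(|y|+|z|)}\widetilde{as}(y,z,x)+(-1)^{|z|(|x|+|y|)}\widetilde{as}(z,x,y)$. *)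

From HB Require Import structures.
From mathcomp Require Import all_boot all_order all_algebra.
Set Implicit Arguments. Unset Strict Implicit. Unset Printing Implicit Defensive.
Import GRing.Theory.
Local Open Scope ring_scope.

(* Parities are booleans (false = even, true = odd); a parity b is used as
   the natural number 0/1 in sign exponents, so (-1)^+(b1*b2) is (-1)^{|x||y|}. *)
Definition sgn (K : pzRingType) (n : nat) : K := (-1) ^+ n.

Definition Z2grading (K : fieldType) (V : lmodType K) (A : bool -> V -> Prop) :=
  [/\ (forall i, A i 0),
      (forall i (a : K) u v, A i u -> A i v -> A i (a *: u + v)),
      (forall v, exists v0 v1, [/\ A false v0, A true v1 & v = v0 + v1])
    & (forall v, A false v -> A true v -> v = 0)].

Definition even_bilinear (K : fieldType) (V : lmodType K) (A : bool -> V -> Prop)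
  (mu : V -> V -> V) :=
  [/\ (forall (a : K) x y z, mu (a *: x + y) z = a *: mu x z + mu y z),
      (forall (a : K) x y z, mu x (a *: y + z) = a *: mu x y + mu x z)
    & (forall i j x y, A i x -> A j y -> A (i (+) j) (mu x y))].

Definition even_linear (K : fieldType) (V : lmodType K) (A : bool -> V -> Prop)
  (alpha : V -> V) :=
  (forall (a : K) x y, alpha (a *: x + y) = a *: alpha x + alpha y) /\
  (forall i x, A i x -> A i (alpha x)).

Definition hasso (K : fieldType) (V : lmodType K) (mu : V -> V -> V) (alpha : V -> V)
  (x y z : V) : V :=
  mu (mu x y) (alpha z) - mu (alpha x) (mu y z).

Definition hom_flexible (K : fieldType) (V : lmodType K) (A : bool -> V -> Prop)
  (mu : V -> V -> V) (alpha : V -> V) :=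
  forall (px py pz : bool) (x y z : V), A px x -> A py y -> A pz z ->
    hasso mu alpha x y z
    + sgn K (px * py + px * pz + py * pz) *: hasso mu alpha z y x = 0.

Definition sbr (K : fieldType) (V : lmodType K) (mu : V -> V -> V)
  (px py : bool) (x y : V) : V :=
  mu x y - sgn K (px * py) *: mu y x.

Definition Jtilde (K : fieldType) (V : lmodType K) (mu : V -> V -> V) (alpha : V -> V)
  (px py pz : bool) (x y z : V) : V :=
  sbr mu (px (+) py) pz (sbr mu px py x y) (alpha z)
  - sbr mu px (py (+) pz) (alpha x) (sbr mu py pz y z)
  - sgn K (py * pz) *: sbr mu (px (+) pz) py (sbr mu px pz x z) (alpha y).

Definition SA (K : fieldType) (V : lmodType K) (mu : V -> V -> V) (alpha : V -> V)
  (px py pz : bool) (x y z : V) : V :=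
  hasso mu alpha x y z
  + sgn K (px * (py + pz)) *: hasso mu alpha y z x
  + sgn K (pz * (px + py)) *: hasso mu alpha z x y.

From HB Require Import structures.
From mathcomp Require Import all_boot all_order all_algebra.
From mathcomp Require Import ring.
Set Implicit Arguments. Unset Strict Implicit. Unset Printing Implicit Defensive.
Import GRing.Theory.
Local Open Scope ring_scope.

(* Expanding by bilinearity, J~ - 2 S is minus a signed sum of the three
   flexibility defects at (x,y,z), (y,z,x) and (z,x,y), each of which vanishes
   in a Hom-flexible superalgebra. *)

Section TrivialExtension.
Variables (K : comNzRingType) (V : lmodType K).

(* The trivial extension K (+) V, (a, u) (b, v) = (ab, av + bu).  Vectors
   multiply to 0 in it, so an identity between K-linear combinations of
   vectors can be checked by [ring] after embedding V. *)
Definition triv_ext := (K * V)%type.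
HB.instance Definition _ := GRing.Zmodule.on triv_ext.

Definition triv_ext_mul (s t : triv_ext) : triv_ext :=
  (s.1 * t.1, s.1 *: t.2 + t.1 *: s.2).

Lemma triv_ext_mulA : associative triv_ext_mul.
Proof.
move=> [a u] [b v] [c w]; rewrite /triv_ext_mul /=; congr (_, _); first exact: mulrA.
by rewrite !scalerDr !scalerA !addrA (mulrC c a) (mulrC c b).
Qed.

Lemma triv_ext_mulC : commutative triv_ext_mul.
Proof. by move=> [a u] [b v]; rewrite /triv_ext_mul /= mulrC addrC. Qed.

Lemma triv_ext_mul1 : left_id (1, 0) triv_ext_mul.
Proof. by move=> [a u]; rewrite /triv_ext_mul /= mul1r scale1r scaler0 addr0. Qed.

Lemma triv_ext_mulDl : left_distributive triv_ext_mul +%R.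
Proof.
move=> [a u] [b v] [c w]; rewrite /triv_ext_mul /=; congr (_, _); first exact: mulrDl.
by rewrite scalerDl !scalerDr addrACA.
Qed.

Lemma triv_ext_one_neq0 : (1, 0) != 0 :> triv_ext.
Proof. by apply/negP => /eqP [] /eqP; rewrite oner_eq0. Qed.

HB.instance Definition _ := GRing.Zmodule_isComNzRing.Build triv_ext
  triv_ext_mulA triv_ext_mulC triv_ext_mul1 triv_ext_mulDl triv_ext_one_neq0.

Definition triv_scal (a : K) : triv_ext := (a, 0).
Definition triv_vec (v : V) : triv_ext := (0, v).

Lemma triv_scal_is_zmod_morphism : zmod_morphism triv_scal.
Proof. by move=> a b; rewrite /triv_scal; congr (_, _); rewrite subrr. Qed.

Lemma triv_scal_is_monoid_morphism : monoid_morphism triv_scal.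
Proof.
split=> // a b; rewrite /triv_scal -[RHS]/(triv_ext_mul _ _) /triv_ext_mul /=.
by rewrite !scaler0 addr0.
Qed.

HB.instance Definition _ := GRing.isZmodMorphism.Build K triv_ext triv_scal
  triv_scal_is_zmod_morphism.
HB.instance Definition _ := GRing.isMonoidMorphism.Build K triv_ext triv_scal
  triv_scal_is_monoid_morphism.

Lemma triv_vecD (u v : V) : triv_vec (u + v) = triv_vec u + triv_vec v.
Proof. by rewrite /triv_vec; congr (_, _); rewrite addr0. Qed.

Lemma triv_vecN (v : V) : triv_vec (- v) = - triv_vec v.
Proof. by rewrite /triv_vec; congr (_, _); rewrite oppr0. Qed.

Lemma triv_vecZ (a : K) (v : V) : triv_vec (a *: v) = triv_scal a * triv_vec v.
Proof.
rewrite /triv_vec /triv_scal -[RHS]/(triv_ext_mul _ _) /triv_ext_mul /=.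
by rewrite mulr0 scaler0 addr0.
Qed.

Lemma triv_vec_inj : injective triv_vec.
Proof. by move=> u v []. Qed.

End TrivialExtension.

Section HomJacobiator.
Variables (K : fieldType) (V : lmodType K) (mu : V -> V -> V) (alpha : V -> V).
Hypothesis mu_linear_l : forall (a : K) x y z, mu (a *: x + y) z = a *: mu x z + mu y z.
Hypothesis mu_linear_r : forall (a : K) x y z, mu x (a *: y + z) = a *: mu x y + mu x z.

Lemma mu0l w : mu 0 w = 0.
Proof.
have := mu_linear_l 1 0 0 w; rewrite !scale1r !addr0 => e.
by apply: (@addrI _ (mu 0 w)); rewrite addr0 -e.
Qed.

Lemma mu0r w : mu w 0 = 0.
Proof.
have := mu_linear_r 1 w 0 0; rewrite !scale1r !addr0 => e.
by apply: (@addrI _ (mu w 0)); rewrite addr0 -e.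
Qed.

Lemma muDl u v w : mu (u + v) w = mu u w + mu v w.
Proof. by rewrite -{1}[u]scale1r mu_linear_l scale1r. Qed.

Lemma muDr u v w : mu w (u + v) = mu w u + mu w v.
Proof. by rewrite -{1}[u]scale1r mu_linear_r scale1r. Qed.

Lemma muZl a u w : mu (a *: u) w = a *: mu u w.
Proof. by rewrite -[a *: u]addr0 mu_linear_l mu0l addr0. Qed.

Lemma muZr a u w : mu w (a *: u) = a *: mu w u.
Proof. by rewrite -[a *: u]addr0 mu_linear_r mu0r addr0. Qed.

Lemma muNl u w : mu (- u) w = - mu u w.
Proof. by rewrite -scaleN1r muZl scaleN1r. Qed.

Lemma muNr u w : mu w (- u) = - mu w u.
Proof. by rewrite -scaleN1r muZr scaleN1r. Qed.

Definition flex_defect (px py pz : bool) (x y z : V) : V :=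
  hasso mu alpha x y z + sgn K (px * py + px * pz + py * pz) *: hasso mu alpha z y x.

Lemma Jtilde_sub_2SA px py pz x y z :
  Jtilde mu alpha px py pz x y z - 2%:R *: SA mu alpha px py pz x y z =
  - (flex_defect px py pz x y z
     + sgn K (px * (py + pz)) *: flex_defect py pz px y z x
     + sgn K (pz * (px + py)) *: flex_defect pz px py z x y).
Proof.
rewrite /Jtilde /SA /flex_defect /sbr /hasso /sgn.
rewrite !(muDl, muDr, muZl, muZr, muNl, muNr).
apply: triv_vec_inj.
rewrite !(triv_vecD, triv_vecN, triv_vecZ, rmorph_sign, rmorph_nat).
by case: px; case: py; case: pz => /=; ring.
Qed.

End HomJacobiator.

Theorem mainTheorem18 (K : closedFieldType) (hchar : [pchar K] =i pred0)
  (V : lmodType K) (A : bool -> V -> Prop) (mu : V -> V -> V) (alpha : V -> V)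
  (hA : Z2grading A) (hmu : even_bilinear A mu) (halpha : even_linear A alpha)
  (hflex : hom_flexible A mu alpha) :
  forall (px py pz : bool) (x y z : V), A px x -> A py y -> A pz z ->
    Jtilde mu alpha px py pz x y z = 2%:R *: SA mu alpha px py pz x y z.
Proof.
move=> px py pz x y z Hx Hy Hz.
case: hmu => mu_linear_l mu_linear_r _.
apply/eqP; rewrite -subr_eq0 (Jtilde_sub_2SA alpha mu_linear_l mu_linear_r).
rewrite /flex_defect (hflex _ _ _ _ _ _ Hx Hy Hz) (hflex _ _ _ _ _ _ Hy Hz Hx).
by rewrite (hflex _ _ _ _ _ _ Hz Hx Hy) !scaler0 !addr0 oppr0.
Qed.
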